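(* For every integer $n\ge 1$, the $n$-dimensional volume of \[ \mathcal{T}^n=\left\{x\in\mathbb{R}^n : \|x\|_\infty\le 1 \text{ and } 1+\sum_{i=1}^n x_i\ge 0\right\} \] is \[ \mathrm{Vol}(\mathcal{T}^n) = 2^n \left[1 - \frac{1}{n!}\sum_{k=0}^{\lfloor \frac{n-1}{2} \rfloor} (-1)^k\binom{n}{k} \left(\frac{n-1}{2}-k \right)^n \right]. \]
   Context: $\mathcal{T}^n$ is called the trace nonnegative polytope. Here $0^n$ with $n\ge1$ equals $0$. *)

From HB Require Import structures.
From mathcomp Require Import all_boot all_order all_algebra.
From mathcomp Require Import all_classical all_reals all_analysis.
Set Implicit Arguments. Unset Strict Implicit. Unset Printing Implicit Defensive.
Import Order.TTheory GRing.Theory Num.Theory.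
Local Open Scope classical_set_scope.
Local Open Scope ring_scope.

Definition rcons0 (R : realType) (n : nat) (x : R) (y : 'rV[R]_n) : 'rV[R]_n.+1 :=
  \row_(i < n.+1) (if unlift ord0 i is Some j then y ord0 j else x).

(* For Borel sets this coincides with the n-dimensional Lebesgue measure. *)
Fixpoint volume (R : realType) (n : nat) : set 'rV[R]_n -> \bar R :=
  match n return set 'rV[R]_n -> \bar R with
  | 0 => fun A => (if pselect (A (0%R : 'rV[R]_0)) then 1 else 0)%E
  | m.+1 => fun A =>
      (\int[@lebesgue_measure R]_(x in [set: R]) volume [set y | A (rcons0 x y)])%E
  end.

Definition trace_nonneg_polytope (R : realType) (n : nat) : set 'rV[R]_n :=
  [set x | (\big[Num.max/0]_(i < n) `|x ord0 i| <= 1) /\ 0 <= 1 + \sum_(i < n) x ord0 i].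

From mathcomp Require Import all_boot all_order all_algebra.
From mathcomp Require Import all_classical all_reals all_analysis.
From mathcomp Require Import measurable_realfun.
From mathcomp Require Import ring lra.
Import Order.TTheory GRing.Theory Num.Theory.
Import numFieldNormedType.Exports.
Local Open Scope classical_set_scope.
Local Open Scope ring_scope.

(* Replace the constant 1 in the trace condition by a parameter c and prove, by
   induction on n, the closed form
   vol {x | |x|_oo <= 1, c + sum x >= 0} = 2^n - 1/n! sum_k (-1)^k C(n,k) (n - c - 2k)_+^n.
   The section of the (n+1)-dimensional slab at first coordinate x in [-1,1] is
   the n-dimensional slab with parameter c + x, so the inductive step integrates
   truncated powers (b - x)_+^n over [-1,1]; Pascal's rule then recombines the
   resulting differences into the (n+1)-dimensional formula. *)

Definition truncpow {R : realType} (m : nat) (u : R) : R := if 0 < u then u ^+ m else 0.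

Lemma truncpow_ge0 (R : realType) m (u : R) : 0 <= truncpow m u.
Proof. by rewrite /truncpow; case: ifPn => // u0; rewrite exprn_ge0 // ltW. Qed.

Section SubrX.
Variables (R : realType) (b : R).

Lemma continuous_subrX m : continuous (fun x : R => (b - x) ^+ m).
Proof.
move=> x; apply: (@continuous_comp _ _ _ (fun y => b - y) (fun y => y ^+ m)).
  by apply: cvgB; [exact: cvg_cst|exact: cvg_id].
exact: exprn_continuous.
Qed.

Lemma derivable_subrX m x : derivable (fun y : R => (b - y) ^+ m) x 1.
Proof.
have := @derivableX _ _ (fun y : R => b - y) m x 1.
by rewrite fctE; apply; exact: derivableB.
Qed.

Lemma derive1_subrX m x :
  (fun y => (b - y) ^+ m)^`()%classic x = - m%:R * (b - x) ^+ m.-1.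
Proof.
rewrite (@derive1_comp _ (fun y => b - y) (fun y => y ^+ m))//; last first.
  exact: exprn_derivable.
rewrite derive1E exp_derive// derive1E deriveB// -derive1E.
by rewrite derive1_cst derive_id sub0r mulrN1 [in RHS]mulNr scaler1.
Qed.

Lemma measurable_fun_subrX m (D : set R) :
  measurable_fun D (EFin \o (fun x : R => (b - x) ^+ m)).
Proof.
apply/measurable_EFinP; apply: (measurable_funS measurableT) => //.
apply: continuous_measurable_fun; exact: continuous_subrX.
Qed.

Lemma integral_itv_subrX (u v : R) m : u < v ->
  (\int[lebesgue_measure]_(x in `[u, v]) ((b - x) ^+ m)%:E =
   (((b - u) ^+ m.+1 - (b - v) ^+ m.+1) / m.+1%:R)%:E)%E.
Proof.
move=> uv.
rewrite (@continuous_FTC2 _ _ (fun x => (b - x) ^+ m.+1 / - m.+1%:R))//=.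
- by rewrite -EFinB; congr EFin; rewrite invrN !mulrN opprK addrC mulrBl.
- by apply: continuous_in_subspaceT => x _; exact: continuous_subrX.
- split.
  + by move=> y _; apply: derivableM => //=; exact: derivable_subrX.
  + apply: cvgM; last exact: cvg_cst.
    by apply: cvg_at_right_filter; exact: continuous_subrX.
  + apply: cvg_at_left_filter; apply: cvgM; last exact: cvg_cst.
    exact: continuous_subrX.
- move=> x _; rewrite derive1Mr//; last exact: derivable_subrX.
  by rewrite derive1_subrX /= mulrAC divff ?mul1r// oppr_eq0 pnatr_eq0.
Qed.

Lemma truncpow_subr_patch m :
  (fun x => (truncpow m (b - x))%:E) =
  ((fun x => ((b - x) ^+ m)%:E) \_ `]-oo, b[)%E.
Proof.
apply/funext => x; rewrite patchE /truncpow subr_gt0.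
case: ifPn => xb; first by rewrite mem_set //= in_itv /= andbT.
by rewrite memNset //= in_itv /=; apply/negP.
Qed.

Lemma integral_truncpow m :
  (\int[lebesgue_measure]_(x in `[(-1)%R, 1%R]) (truncpow m (b - x))%:E =
   ((truncpow m.+1 (b + 1) - truncpow m.+1 (b - 1)) / m.+1%:R)%:E)%E.
Proof.
rewrite truncpow_subr_patch -integral_mkcondr /truncpow.
have [bN1|b_gtN1] := leP b (-1).
  have -> : `[-1, 1] `&` `]-oo, b[ = set0 :> set R.
    apply/seteqP; split => x //=; rewrite !in_itv /= => -[/andP[x1 _] xb]; lra.
  rewrite integral_set0 ifF; last by apply/negbTE; rewrite -leNgt; lra.
  by rewrite ifF ?subrr ?mul0r //; apply/negbTE; rewrite -leNgt; lra.
have [b1|b_gt1] := leP b 1.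
  have -> : `[-1, 1] `&` `]-oo, b[ = `[-1, b[%classic :> set R.
    apply/seteqP; split => x /=; rewrite !in_itv /=; first by move=> [/andP[-> _] ->].
    by move=> /andP[x1 xb]; split => //; apply/andP; split => //; lra.
  rewrite integral_itv_bndo_bndc; last exact: measurable_fun_subrX.
  rewrite integral_itv_subrX // subrr expr0n subr0 opprK ifT; last lra.
  by rewrite ifF ?subr0 //; apply/negbTE; rewrite -leNgt; lra.
have -> : `[-1, 1] `&` `]-oo, b[ = `[-1, 1]%classic :> set R.
  apply/seteqP; split => x /=; rewrite !in_itv /=; first by case.
  by move=> /andP[x0 x1]; split; [rewrite x0 x1|lra].
by rewrite integral_itv_subrX ?opprK ?ifT //; lra.
Qed.

Lemma integrable_truncpow m :
  lebesgue_measure.-integrable `[(-1)%R, 1%R] (fun x => (truncpow m (b - x))%:E).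
Proof.
apply/integrableP; split.
  by rewrite truncpow_subr_patch; apply/measurable_restrict => //; exact: measurable_fun_subrX.
under eq_integral do rewrite gee0_abs ?lee_fin ?truncpow_ge0 //.
by rewrite integral_truncpow ltry.
Qed.

End SubrX.

Lemma integrableZ_truncpow (R : realType) (w b : R) m :
  lebesgue_measure.-integrable `[(-1)%R, 1%R] (fun x => (w * truncpow m (b - x))%:E).
Proof.
rewrite (_ : (fun x => _) = (fun x => (w%:E * (truncpow m (b - x))%:E)%E)).
  exact/integrableZl/integrable_truncpow.
by apply/funext => x; rewrite EFinM.
Qed.

Section SumTruncpow.
Variables (R : realType) (r : seq nat) (w b : nat -> R) (m : nat).

Lemma integrable_sum_truncpow :
  lebesgue_measure.-integrable `[(-1)%R, 1%R]
    (fun x => (\sum_(k <- r) w k * truncpow m (b k - x))%:E).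
Proof.
rewrite (_ : (fun x => _) =
    (fun x => \sum_(k <- r) (w k * truncpow m (b k - x))%:E)%E).
  by apply: integrable_sum => // k _; exact: integrableZ_truncpow.
by apply/funext => x; rewrite sumEFin.
Qed.

Lemma integral_sum_truncpow :
  (\int[lebesgue_measure]_(x in `[(-1)%R, 1%R])
      (\sum_(k <- r) w k * truncpow m (b k - x))%:E =
   (\sum_(k <- r) w k * ((truncpow m.+1 (b k + 1) - truncpow m.+1 (b k - 1)) / m.+1%:R))%:E)%E.
Proof.
under eq_integral do rewrite -sumEFin.
rewrite integral_sum //; last by move=> k; exact: integrableZ_truncpow.
rewrite -sumEFin; apply: eq_bigr => k _.
under eq_integral do rewrite EFinM.
by rewrite integralZl ?integral_truncpow -?EFinM //; exact: integrable_truncpow.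
Qed.

End SumTruncpow.

Lemma sum_signed_binomial_diff (R : comPzRingType) (g : nat -> R) n :
  \sum_(0 <= k < n.+1) (-1) ^+ k * 'C(n, k)%:R * (g k - g k.+1) =
  \sum_(0 <= k < n.+2) (-1) ^+ k * 'C(n.+1, k)%:R * g k.
Proof.
have shift_top : \sum_(0 <= k < n.+1) (-1) ^+ k.+1 * 'C(n, k.+1)%:R * g k.+1 =
                 \sum_(0 <= k < n) (-1) ^+ k.+1 * 'C(n, k.+1)%:R * g k.+1.
  by rewrite big_nat_recr //= bin_small // mulr0 mul0r addr0.
have split_bottom : \sum_(0 <= k < n.+1) (-1) ^+ k * 'C(n, k)%:R * g k =
          g 0 + \sum_(0 <= k < n) (-1) ^+ k.+1 * 'C(n, k.+1)%:R * g k.+1.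
  by rewrite big_nat_recl // expr0 bin0 !mul1r.
have flip_sign : \sum_(0 <= k < n.+1) (-1) ^+ k.+1 * 'C(n, k)%:R * g k.+1 =
          - \sum_(0 <= k < n.+1) (-1) ^+ k * 'C(n, k)%:R * g k.+1.
  by rewrite -sumrN; apply: eq_bigr => k _; rewrite exprS mulN1r !mulNr.
rewrite [RHS]big_nat_recl // expr0 bin0 !mul1r.
under [X in _ = _ + X]eq_bigr do rewrite binS natrD mulrDr mulrDl.
rewrite big_split /= shift_top flip_sign.
under eq_bigr do rewrite mulrBr.
by rewrite sumrB split_bottom; ring.
Qed.

Definition trace_slab {R : realType} (n : nat) (c : R) : set 'rV[R]_n :=
  [set x | (\big[Num.max/0]_(i < n) `|x ord0 i| <= 1) /\ 0 <= c + \sum_(i < n) x ord0 i].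

Definition trace_slab_vol {R : realType} (n : nat) (c : R) : R :=
  2 ^+ n - \sum_(0 <= k < n.+1)
    ((-1) ^+ k * 'C(n, k)%:R / n`!%:R) * truncpow n (n%:R - c - 2 * k%:R).

Lemma volume_set0 (R : realType) n : @volume R n set0 = 0%E.
Proof.
elim: n => [|n IH] /=; first by case: pselect.
under eq_integral => x _ do rewrite (_ : [set y | set0 (rcons0 x y)] = set0) // IH.
by rewrite integral0.
Qed.

Lemma rcons0_ord0 (R : realType) n (x : R) (y : 'rV[R]_n) : rcons0 x y ord0 ord0 = x.
Proof. by rewrite /rcons0 mxE unlift_none. Qed.

Lemma rcons0_lift (R : realType) n (x : R) (y : 'rV[R]_n) j :
  rcons0 x y ord0 (lift ord0 j) = y ord0 j.
Proof. by rewrite /rcons0 mxE liftK. Qed.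

Lemma trace_slab_section (R : realType) n (c x : R) :
  [set y | trace_slab n.+1 c (rcons0 x y)] =
  if `|x| <= 1 then trace_slab n (c + x) else set0.
Proof.
have max_rcons0 y : \big[Num.max/0]_(i < n.+1) `|rcons0 x y ord0 i| =
    Num.max `|x| (\big[Num.max/0]_(i < n) `|y ord0 i|).
  by rewrite big_ord_recl rcons0_ord0; under eq_bigr do rewrite rcons0_lift.
have sum_rcons0 y : \sum_(i < n.+1) rcons0 x y ord0 i = x + \sum_(i < n) y ord0 i.
  by rewrite big_ord_recl rcons0_ord0; under eq_bigr do rewrite rcons0_lift.
case: ifPn => hx; apply/seteqP; split => y;
  rewrite /trace_slab /= max_rcons0 sum_rcons0 ge_max.
- by move=> [/andP[_ h1] h2]; split => //; rewrite -addrA.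
- by move=> [h1 h2]; split; [rewrite hx h1 | rewrite addrA].
- by move=> [/andP[h _] _]; rewrite h in hx.
- by [].
Qed.

Lemma volume_trace_slab_succ (R : realType) n (c : R) :
  volume (trace_slab n.+1 c) =
  (\int[lebesgue_measure]_(x in `[(-1)%R, 1%R]) volume (trace_slab n (c + x)))%E.
Proof.
rewrite [RHS]integral_mkcond; apply: eq_integral => x _.
rewrite trace_slab_section patchE; case: ifPn => hx.
  by rewrite mem_set //= in_itv /= -ler_norml.
rewrite memNset; first exact: volume_set0.
by rewrite /= in_itv /= -ler_norml; apply/negP.
Qed.

Lemma trace_slab_vol0 (R : realType) (c : R) :
  volume (trace_slab 0 c) = (trace_slab_vol 0 c)%:E.
Proof.
rewrite /= /trace_slab_vol big_nat1 expr0 bin0 fact0 /truncpow /=.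
have slab0E : trace_slab 0 c 0 <-> 0 <= c.
  by rewrite /trace_slab /= !big_ord0 addr0; split => [[]//|->]; split.
case: pselect => [/slab0E c_ge0|c_lt0] /=.
  rewrite ifF; first by rewrite mulr0 subr0.
  by apply/negbTE; rewrite -leNgt; lra.
have c_neg : c < 0 by rewrite ltNge; apply/negP => /slab0E.
rewrite ifT; last lra.
by congr EFin; rewrite !expr0; lra.
Qed.

Lemma integral_trace_slab_vol (R : realType) n (c : R) :
  (\int[lebesgue_measure]_(x in `[(-1)%R, 1%R]) (trace_slab_vol n (c + x))%:E =
   (trace_slab_vol n.+1 c)%:E)%E.
Proof.
pose w k : R := (-1) ^+ k * 'C(n, k)%:R / n`!%:R.
pose b k : R := n%:R - c - 2 * k%:R.
have volE x : (trace_slab_vol n (c + x))%:E =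
    ((2 ^+ n : R)%:E - (\sum_(0 <= k < n.+1) w k * truncpow n (b k - x))%:E)%E.
  rewrite /trace_slab_vol EFinB; congr (_ - EFin _)%E; apply: eq_bigr => k _.
  by rewrite /w /b; congr (_ * truncpow _ _); ring.
under eq_integral do rewrite volE.
rewrite integralB_EFin //; first last.
- exact: integrable_sum_truncpow.
- apply: continuous_compact_integrable; first exact: segment_compact.
  by apply: continuous_subspaceT => x; exact: cst_continuous.
rewrite integral_cst //= lebesgue_measure_itv /= lte_fin ifT; last lra.
rewrite integral_sum_truncpow -EFinM -EFinB; congr EFin.
pose g j := truncpow n.+1 (n.+1%:R - c - 2 * j%:R : R).
have nf0 : (n`!%:R : R) != 0 by rewrite pnatr_eq0 -lt0n fact_gt0.
have termE k : w k * ((truncpow n.+1 (b k + 1) - truncpow n.+1 (b k - 1)) / n.+1%:R) =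
    ((n.+1)`!%:R)^-1 * ((-1) ^+ k * 'C(n, k)%:R * (g k - g k.+1)).
  have -> : b k + 1 = n.+1%:R - c - 2 * k%:R by rewrite /b -natr1; ring.
  have -> : b k - 1 = n.+1%:R - c - 2 * k.+1%:R by rewrite /b -!natr1; ring.
  by rewrite /w /g factS natrM; field; rewrite nf0 /= addrC natr1.
under eq_bigr do rewrite termE.
rewrite -big_distrr /= sum_signed_binomial_diff /trace_slab_vol exprS big_distrr /=.
congr (_ - _); first lra.
by apply: eq_bigr => k _; rewrite /g; ring.
Qed.

Lemma volume_trace_slab (R : realType) n (c : R) :
  volume (trace_slab n c) = (trace_slab_vol n c)%:E.
Proof.
elim: n c => [|n IH] c; first exact: trace_slab_vol0.
rewrite volume_trace_slab_succ -integral_trace_slab_vol.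
by apply: eq_integral => x _; rewrite IH.
Qed.

Lemma truncpow_trace_term (R : realType) (n k : nat) : (1 <= n)%N ->
  truncpow n (n%:R - 1 - 2 * k%:R : R) =
  2 ^+ n * (if (k < (n.-1)./2.+1)%N then ((n.-1)%:R / 2 - k%:R) ^+ n else 0).
Proof.
move=> n_gt0.
have predn_nat : (n.-1)%:R = n%:R - 1 :> R by rewrite -subn1 natrB.
have double_nat : (k.*2)%:R = 2 * k%:R :> R by rewrite -mul2n natrM.
have -> : (n%:R - 1 - 2 * k%:R : R) = 2 * ((n.-1)%:R / 2 - k%:R).
  by rewrite predn_nat; field.
rewrite /truncpow; case: ltnP => hk.
  rewrite ltnS geq_half_double -(ler_nat R) double_nat in hk.
  case: ifPn => pos; first by rewrite exprMn.
  have -> : (n.-1)%:R / 2 - k%:R = 0 :> R by lra.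
  by rewrite expr0n gtn_eqF // mulr0.
rewrite ltn_half_double -(ltr_nat R) double_nat in hk.
by rewrite ifF ?mulr0 //; apply/negbTE; rewrite -leNgt; lra.
Qed.

Lemma trace_slab_vol1 (R : realType) n : (1 <= n)%N ->
  trace_slab_vol n (1 : R) = 2 ^+ n * (1 - (n`!%:R)^-1 *
      \sum_(0 <= k < (n.-1)./2.+1)
        (-1) ^+ k * 'C(n, k)%:R * ((n.-1)%:R / 2 - k%:R) ^+ n).
Proof.
move=> n_gt0; rewrite /trace_slab_vol.
under eq_bigr do rewrite truncpow_trace_term //.
have half_le : ((n.-1)./2.+1 <= n.+1)%N.
  rewrite ltnS; apply: leq_trans (leq_pred n).
  by rewrite leq_half_double -addnn -addSn leq_addl.
rewrite (big_nat_widen _ _ _ _ _ half_le) /= mulrBr mulr1 !big_distrr /=.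
congr (_ - _); rewrite [RHS]big_mkcond /=; apply: eq_bigr => k _.
by case: ifP => _; [ring|rewrite !mulr0].
Qed.

Theorem corollary1 (R : realType) (n : nat) (hn : (1 <= n)%N) :
  @volume R n (@trace_nonneg_polytope R n) =
  ((2 ^+ n * (1 - (n`!%:R)^-1 *
      \sum_(0 <= k < (n.-1)./2.+1)
        (-1) ^+ k * 'C(n, k)%:R * ((n.-1)%:R / 2 - k%:R) ^+ n)) : R)%:E.
Proof.
have -> : @trace_nonneg_polytope R n = trace_slab n 1 by [].
by rewrite volume_trace_slab trace_slab_vol1.
Qed.
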